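(* Let $G=(V,\mathcal{E})$ be the labeled graph associated with a tensor product (either the externally labeled graph $G^E(\pi)$ or the skeleton $G(\pi)$), and for an ordered partition $\Pi$ of $V$ let $\mathcal{E}(\pi,\Pi)=\{\theta(p(i,\Pi),p(j,\Pi)) : \theta(i,j)\in\mathcal{E}\}$. If $\Pi_1\prec\Pi_2$ are ordered partitions of $V$, then $\mathcal{E}(\pi,\Pi_1)>\mathcal{E}(\pi,\Pi_2)$.
   Context: Setting: a tensor product with factor set $S$ and slot set $\Omega$ is encoded by a coloring $\pi$ of $\Omega$ by index symbols (external symbols used once, internal symbols exactly twice, each symbol having a type). Its graph has vertex set $V=\Omega\cup\{0\}$ ($0$ an auxiliary vertex, omitted if there are no external indices) and labeled edges: $\{0,j\}$ for every slot $j$ carrying an external index, and $\{i,j\}$ for every pair of slots $i\ne j$ carrying the same internal index; a labeled edge $\theta(u,v)$ is the unordered pair $\{u,v\}$ with a label $\mathrm{type}[\mathrm{index}]$ (in $G^E(\pi)$ external edges carry the specific external symbol and internal edges a generic index; in $G(\pi)$ all edges carry a generic index). An ordered partition of $V$ is a sequence $\Pi=(\Pi_1,\dots,\Pi_r)$ of nonempty pairwise disjoint cells with union $V$. $\Pi\preceq\Pi'$ ($\Pi$ finer than $\Pi'$) if every cell of $\Pi'$ is a union of consecutive cells of $\Pi$; $\Pi\prec\Pi'$ means $\Pi\preceq\Pi'$ and $\Pi\neq\Pi'$. The position of $v\in\Pi_k$ is $p(v,\Pi)=1+\sum_{i=1}^{k-1}|\Pi_i|$. Labeled edge sets are compared lexicographically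 as sorted lists (with multiplicity) of labeled edges, each labeled edge $\theta(u,v)$ being compared lexicographically by its vertex pair (written with the smaller vertex first) and then by its label under a fixed total order of labels. *)

From mathcomp Require Import all_boot.
Set Implicit Arguments. Unset Strict Implicit. Unset Printing Implicit Defensive.

Inductive gkind := ExtLabeled | Skeleton.

Section TensorGraph.
Variables (Ty Idx : eqType) (typ : Idx -> Ty) (isext : Idx -> bool).

(* A label type[index]: the type, together with the specific index symbol
   (Some x) or the generic index (None). *)
Definition label := (Ty * option Idx)%type.

Definition elabel (k : gkind) (x : Idx) : label :=
  match k with
  | ExtLabeled => (typ x, if isext x then Some x else None)
  | Skeleton => (typ x, None)
  end.

(* Slots are 'I_n; vertex set lives in 'I_n.+1: ord0 is the auxiliary vertex 0,
   slot j is the vertex j+1. *)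
Definition slotv n (j : 'I_n) : 'I_n.+1 := lift ord0 j.

Definition tensor_ok n (pi : 'I_n -> Idx) : Prop :=
  forall j : 'I_n,
    count (pred1 (pi j)) [seq pi i | i <- enum 'I_n] = if isext (pi j) then 1 else 2.

Definition has_ext n (pi : 'I_n -> Idx) : bool := [exists j, isext (pi j)].

Definition Vset n (pi : 'I_n -> Idx) : {set 'I_n.+1} :=
  if has_ext pi then setT else [set~ ord0].

Definition graph_edges (k : gkind) n (pi : 'I_n -> Idx)
  : seq ('I_n.+1 * 'I_n.+1 * label) :=
  [seq (ord0, slotv j, elabel k (pi j)) | j <- [seq j <- enum 'I_n | isext (pi j)]]
  ++ [seq (slotv i, slotv (j : 'I_n), elabel k (pi i))
      | i : 'I_n <- enum 'I_n,
        j : 'I_n <- [seq j : 'I_n <- enum 'I_n | (i < j) && (pi i == pi j) && ~~ isext (pi i)]].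

End TensorGraph.

Definition is_opart (T : finType) (V : {set T}) (P : seq {set T}) : bool :=
  [&& all (fun A => A != set0) P,
      pairwise (fun A B : {set T} => [disjoint A & B]) P
    & \bigcup_(A <- P) A == V].

(* P is finer than Q: Q is obtained by merging consecutive runs of cells of P
   (in order). *)
Definition finer (T : finType) (P Q : seq {set T}) : Prop :=
  exists B : seq (seq {set T}),
    [/\ P = flatten B, all (fun b => b != [::]) B
      & Q = [seq \bigcup_(A <- b) A | b <- B]].

Definition strictly_finer (T : finType) (P Q : seq {set T}) : Prop :=
  finer P Q /\ P <> Q.

Definition pos (T : finType) (P : seq {set T}) (v : T) : nat :=
  1 + sumn [seq #|A| | A : {set T} <- take (find (fun A : {set T} => v \in A) P) P].

Section Compare.
Variables (L : eqType) (ltL : rel L).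

Definition strict_total_order : Prop :=
  [/\ irreflexive ltL, transitive ltL & forall x y, x != y -> ltL x y || ltL y x].

Definition lt_edge (e1 e2 : nat * nat * L) : bool :=
  let: (a1, b1, l1) := e1 in let: (a2, b2, l2) := e2 in
  (a1 < a2) || ((a1 == a2) && ((b1 < b2) || ((b1 == b2) && ltL l1 l2))).

Definition le_edge (e1 e2 : nat * nat * L) : bool := (e1 == e2) || lt_edge e1 e2.

Fixpoint lex_lt (s t : seq (nat * nat * L)) : bool :=
  match s, t with
  | [::], _ :: _ => true
  | x :: s', y :: t' => lt_edge x y || ((x == y) && lex_lt s' t')
  | _, _ => false
  end.

Definition relabel (T : finType) (P : seq {set T}) (e : T * T * L) : nat * nat * L :=
  let: (u, v, l) := e in (minn (pos P u) (pos P v), maxn (pos P u) (pos P v), l).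

Definition E_rel (T : finType) (E : seq (T * T * L)) (P : seq {set T}) :=
  sort le_edge [seq relabel P e | e <- E].

End Compare.

From mathcomp Require Import all_boot zify.
Set Implicit Arguments. Unset Strict Implicit. Unset Printing Implicit Defensive.

(* Merging consecutive cells never moves a vertex to a later position, so every
   relabelled edge weakly decreases; as the refinement is strict, some cell of
   the coarser partition is the union of at least two cells, and any vertex of
   its second cell moves to a strictly earlier position.  Every vertex of V has an incident
   edge, so at least one edge strictly decreases.  Pointwise weak decrease with
   at least one strict decrease makes the sorted list lexicographically
   smaller. *)

Section EdgeOrder.
Variables (L : eqType) (ltL : rel L).
Hypothesis ltL_order : strict_total_order ltL.

Local Notation edge := (nat * nat * L)%type.

Lemma lt_edge_irr : irreflexive (lt_edge ltL).
Proof.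
by case: ltL_order => irr _ _ [[a b] l] /=; rewrite !ltnn !eqxx irr.
Qed.

Lemma lt_edge_trans : transitive (lt_edge ltL).
Proof.
case: ltL_order => _ tr _ [[a2 b2] l2] [[a1 b1] l1] [[a3 b3] l3] /=.
case/orP=> [h1|/andP[/eqP e1 /orP[h1|/andP[/eqP e2 h1]]]];
case/orP=> [h2|/andP[/eqP e3 /orP[h2|/andP[/eqP e4 h2]]]]; subst;
  rewrite ?eqxx /=; try (apply/orP; left; lia).
all: try (apply/orP; right; apply/orP; left; lia).
by rewrite !ltnn /= (tr _ _ _ h1 h2).
Qed.

Lemma lt_edge_total e1 e2 : e1 != e2 -> lt_edge ltL e1 e2 || lt_edge ltL e2 e1.
Proof.
case: ltL_order => _ _ tot; case: e1 e2 => [[a1 b1] l1] [[a2 b2] l2] ne /=.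
case: (ltngtP a1 a2) => //= ea; case: (ltngtP b1 b2) => //= eb; subst.
by apply: tot; apply: contra ne => /eqP->.
Qed.

Lemma le_edge_trans : transitive (le_edge ltL).
Proof.
move=> e2 e1 e3 /orP[/eqP-> //|lt12] /orP[/eqP<-|lt23]; first by rewrite /le_edge lt12 orbT.
by rewrite /le_edge (lt_edge_trans lt12 lt23) orbT.
Qed.

Lemma le_edge_total : total (le_edge ltL).
Proof.
move=> e1 e2; case: (eqVneq e1 e2) => [->|ne]; first by rewrite /le_edge eqxx.
by rewrite /le_edge (negbTE ne) eq_sym (negbTE ne) lt_edge_total.
Qed.

Lemma le_edge_anti : antisymmetric (le_edge ltL).
Proof.
move=> e1 e2 /andP[/orP[/eqP //|lt12] /orP[/eqP //|lt21]].
by have := lt_edge_trans lt12 lt21; rewrite lt_edge_irr.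
Qed.

Lemma sort_edge_head (s : seq edge) e es :
  sort (le_edge ltL) s = e :: es -> {in s, forall e', le_edge ltL e e'}.
Proof.
move=> Es e'; rewrite -(mem_sort (le_edge ltL)) Es inE => /orP[/eqP-> | e'es].
  by rewrite /le_edge eqxx.
have := sort_sorted le_edge_total s; rewrite Es /= (path_sortedE le_edge_trans).
by case/andP=> /allP/(_ _ e'es).
Qed.

Lemma sort_edge_cons (s t : seq edge) e :
  perm_eq s (e :: t) -> {in s, forall e', le_edge ltL e e'} ->
  sort (le_edge ltL) s = e :: sort (le_edge ltL) t.
Proof.
move=> Est e_min; apply: (sorted_eq le_edge_trans le_edge_anti).
- exact: sort_sorted le_edge_total s.
- rewrite /= (path_sortedE le_edge_trans) sort_sorted ?andbT; last exact: le_edge_total.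
  by apply/allP=> e' /[!mem_sort] e't; apply: e_min; rewrite (perm_mem Est) inE e't orbT.
- by rewrite perm_sort (permPl Est) perm_cons perm_sym perm_sort.
Qed.

(* The minimum of the [f]-images is some [f x]; the minimum of the [g]-images
   lies below [g x <= f x], and if they coincide we remove [x] and recurse. *)
Lemma lex_lt_sort_map (T : eqType) (g f : T -> edge) (E : seq T) :
  {in E, forall x, le_edge ltL (g x) (f x)} -> has (fun x => g x != f x) E ->
  lex_lt ltL (sort (le_edge ltL) (map g E)) (sort (le_edge ltL) (map f E)).
Proof.
have [m] := ubnP (size E); elim: m E => // m IH E; rewrite ltnS => sizeE g_le_f g_ne_f.
case Ef: (sort _ (map f E)) => [|b sf].
  by move/(congr1 size): Ef; rewrite size_sort size_map; case: E g_ne_f {sizeE g_le_f}.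
case Eg: (sort _ (map g E)) => [|a sg].
  by move/(congr1 size): Eg; rewrite size_sort size_map; case: E g_ne_f {sizeE g_le_f Ef}.
have /mapP[x Ex fx] : b \in map f E by rewrite -(mem_sort (le_edge ltL)) Ef mem_head.
have a_le_gx : le_edge ltL a (g x) by apply: (sort_edge_head Eg); apply: map_f.
have /orP[/eqP a_fx | a_lt_fx] := le_edge_trans a_le_gx (g_le_f x Ex); last first.
  by rewrite fx /= a_lt_fx.
have gx : g x = a by apply: le_edge_anti; rewrite a_le_gx a_fx g_le_f.
have ErE := perm_to_rem Ex.
have Egx : sort (le_edge ltL) (map g E) = g x :: sort (le_edge ltL) (map g (rem x E)).
  apply: sort_edge_cons; first exact: (perm_map g ErE : perm_eq _ (_ :: _)).
  by rewrite gx; apply: sort_edge_head Eg.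
have Efx : sort (le_edge ltL) (map f E) = f x :: sort (le_edge ltL) (map f (rem x E)).
  apply: sort_edge_cons; first exact: (perm_map f ErE : perm_eq _ (_ :: _)).
  by rewrite -fx; apply: sort_edge_head Ef.
move: Eg Ef; rewrite Egx Efx => -[_ <-] [_ <-] /=.
rewrite fx -a_fx lt_edge_irr eqxx /=; apply: IH.
- by rewrite size_rem // (leq_trans _ sizeE) // ltn_predL; case: (E) Ex.
- by move=> y /mem_rem; apply: g_le_f.
- by move: g_ne_f; rewrite (perm_has _ ErE) /= gx a_fx eqxx.
Qed.

Lemma le_relabel (T : finType) (P Q : seq {set T}) (e : T * T * L) :
  (forall v, pos Q v <= pos P v) -> le_edge ltL (relabel Q e) (relabel P e).
Proof.
case: e => [[u w] l] QP /=; have := QP u; have := QP w.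
set qu := pos Q u; set pu := pos P u; set qw := pos Q w; set pw := pos P w => hw hu.
rewrite /le_edge; case: eqP => //= ne.
case: (ltngtP (minn qu qw) (minn pu pw)) => //= [|em]; first lia.
case: (ltngtP (maxn qu qw) (maxn pu pw)) => //= [|eM]; first lia.
by case: ne; rewrite em eM.
Qed.

Lemma relabel_neq (T : finType) (P Q : seq {set T}) (u w : T) (l : L) :
  (forall v, pos Q v <= pos P v) -> pos Q u < pos P u \/ pos Q w < pos P w ->
  relabel Q (u, w, l) != relabel P (u, w, l).
Proof.
move=> QP lt_uw; rewrite /= !xpair_eqE eqxx andbT.
by apply/negP => /andP[/eqP eq_min /eqP eq_max]; have := QP u; have := QP w; lia.
Qed.

End EdgeOrder.

Section Positions.
Variable T : finType.
Implicit Types (A : {set T}) (s P : seq {set T}) (v : T).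

Lemma pos_cons A P v : pos (A :: P) v = if v \in A then 1 else #|A| + pos P v.
Proof. by rewrite /pos /=; case: (v \in A) => //=; rewrite addnCA. Qed.

Lemma pos_cat s P v :
  ~~ has (fun A => v \in A) s -> pos (s ++ P) v = sumn [seq #|A| | A <- s] + pos P v.
Proof.
elim: s => [|A s IH] //= /norP[vA vs].
by rewrite pos_cons (negbTE vA) IH // addnA.
Qed.

Lemma mem_bigcup_seq s v : (v \in \bigcup_(A <- s) A) = has (fun A => v \in A) s.
Proof. by elim: s => [|A s IH]; rewrite ?big_nil ?big_cons ?inE //= IH. Qed.

Lemma card_bigcup_seq s : #|\bigcup_(A <- s) A| <= sumn [seq #|A| | A <- s].
Proof.
elim: s => [|A s IH]; first by rewrite big_nil cards0.
by rewrite big_cons /=; apply: leq_trans (leq_card_setU _ _) _; rewrite leq_add2l.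
Qed.

Lemma pos_merge_le (B : seq (seq {set T})) v :
  pos [seq \bigcup_(A <- b) A | b <- B] v <= pos (flatten B) v.
Proof.
elim: B => [|b B IH] //=; rewrite pos_cons mem_bigcup_seq.
case: ifP => [_|vb]; first by rewrite /pos; case: (flatten _).
by rewrite pos_cat ?vb // leq_add // card_bigcup_seq.
Qed.

Lemma pos_merge_lt (B : seq (seq {set T})) :
  all (fun b => b != [::]) B -> all (fun A => A != set0) (flatten B) ->
  pairwise (fun A1 A2 : {set T} => [disjoint A1 & A2]) (flatten B) ->
  flatten B <> [seq \bigcup_(A <- b) A | b <- B] ->
  exists2 v, has (fun A => v \in A) (flatten B) &
    pos [seq \bigcup_(A <- b) A | b <- B] v < pos (flatten B) v.
Proof.
elim: B => [|b B IH] //= /andP[b_ne Bn]; case: b b_ne => [|A1 [|A2 b]] //= _.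
  rewrite big_seq1 => /andP[_ Fn] /andP[A1F pwF] ne.
  have [|v vF lt] := IH Bn Fn pwF; first by move=> e; apply: ne; rewrite e.
  have vA1 : v \notin A1 by case/hasP: vF => C CF vC; rewrite (disjointFl (allP A1F C CF)).
  by exists v; rewrite ?vF ?orbT // !pos_cons (negbTE vA1) ltn_add2l.
case/and3P=> /set0Pn[u uA1] /set0Pn[v vA2] _ /andP[/andP[A1A2 _] _] _.
exists v; first by rewrite vA2 orbT.
rewrite !pos_cons mem_bigcup_seq /= vA2 orbT (disjointFl A1A2 vA2).
by rewrite -[X in X < _]add0n ltn_add2r; apply/card_gt0P; exists u.
Qed.

End Positions.

Section GraphEdges.
Variables (Ty Idx : eqType) (typ : Idx -> Ty) (isext : Idx -> bool) (k : gkind).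
Variables (n : nat) (pi : 'I_n -> Idx).

Local Notation edges := (graph_edges typ isext k pi).

Lemma ext_edge_in j :
  isext (pi j) -> (ord0, slotv j, elabel typ isext k (pi j)) \in edges.
Proof. by move=> ej; rewrite mem_cat map_f // mem_filter ej mem_enum. Qed.

Lemma int_edge_in (i j : 'I_n) : i < j -> pi i = pi j -> ~~ isext (pi i) ->
  (slotv i, slotv j, elabel typ isext k (pi i)) \in edges.
Proof.
move=> ij pij ni; rewrite mem_cat; apply/orP; right.
apply: (allpairs_f_dep (fun i j : 'I_n => (slotv i, slotv j, elabel typ isext k (pi i)))).
  by rewrite mem_enum.
by rewrite mem_filter ij -pij eqxx ni mem_enum.
Qed.

Lemma internal_partner j : tensor_ok isext pi -> ~~ isext (pi j) ->
  exists2 i, i != j & pi i = pi j.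
Proof.
move=> ok nj; case: (pickP (fun i => (i != j) && (pi i == pi j))) => [i /andP[ij /eqP]|none].
  by exists i.
have := ok j; rewrite (negbTE nj) count_map (@eq_count _ _ (pred1 j)).
  by rewrite count_uniq_mem ?enum_uniq // mem_enum.
by move=> i /=; case: (eqVneq i j) => [->|ij]; [rewrite eqxx | have := none i; rewrite /= ij].
Qed.

Lemma graph_edges_incident v : tensor_ok isext pi -> v \in Vset isext pi ->
  exists2 e, e \in edges & e.1.1 = v \/ e.1.2 = v.
Proof.
move=> ok; case: (unliftP ord0 v) => [j ->|->] vV; last first.
  move: vV; rewrite /Vset; case: ifP => [/existsP[j ej] _|_]; last by rewrite !inE eqxx.
  by exists (ord0, slotv j, elabel typ isext k (pi j)); [apply: ext_edge_in | left].
case ej: (isext (pi j)).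
  by exists (ord0, slotv j, elabel typ isext k (pi j)); [apply: ext_edge_in | right].
have [i ij pij] := internal_partner ok (negbT ej).
case: (ltngtP i j) => [lt_ij|lt_ji|/val_inj eij]; last by rewrite eij eqxx in ij.
- exists (slotv i, slotv j, elabel typ isext k (pi i)); last by right.
  by apply: int_edge_in; rewrite ?pij ?ej.
- exists (slotv j, slotv i, elabel typ isext k (pi j)); last by left.
  by apply: int_edge_in; rewrite ?ej.
Qed.

End GraphEdges.

Theorem theorem5 (Ty Idx : eqType) (typ : Idx -> Ty) (isext : Idx -> bool)
    (ltL : rel (label Ty Idx)) (HltL : strict_total_order ltL)
    (k : gkind) (n : nat) (pi : 'I_n -> Idx) (Hpi : tensor_ok isext pi)
    (P1 P2 : seq {set 'I_n.+1}) :
  is_opart (Vset isext pi) P1 -> is_opart (Vset isext pi) P2 ->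
  strictly_finer P1 P2 ->
  lex_lt ltL (E_rel ltL (graph_edges typ isext k pi) P2)
             (E_rel ltL (graph_edges typ isext k pi) P1).
Proof.
move=> /and3P[cells_ne cells_disj cells_cover] _ [[B [P1E blocks_ne P2E]] ne]; subst P1 P2.
have pos_le := pos_merge_le B.
apply: (lex_lt_sort_map HltL); first by move=> e _ /=; apply: le_relabel pos_le.
have [v vB pos_lt] := pos_merge_lt blocks_ne cells_ne cells_disj ne.
have vV : v \in Vset isext pi by rewrite -(eqP cells_cover) mem_bigcup_seq.
have [[[a b] l] e_in ab_v] := graph_edges_incident typ k Hpi vV.
apply/hasP; exists (a, b, l) => //; apply: relabel_neq pos_le _.
by case: ab_v => /= ->; [left | right].
Qed.
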